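(* Let $(X,\mathcal S,\mu)$ be a finite positive (not necessarily complete) measure space, let $0\le k\le d$ be integers, and let $X\ni x\mapsto V_x\in\mathrm{Gr}_k(\mathbb R^d)$ be a map. The following are equivalent: 1) there is $X_1\in\mathcal S$ with $\mu(X\setminus X_1)=0$ such that $X_1\ni x\mapsto V_x$ is measurable, $\mathrm{Gr}_k(\mathbb R^d)$ being endowed with its Borel $\sigma$-algebra; 2) there is $X_2\in\mathcal S$ with $\mu(X\setminus X_2)=0$ and measurable maps $v_1,\dots,v_k:X_2\to\mathbb R^d$ such that for all $x\in X_2$, $\{v_1(x),\dots,v_k(x)\}$ is an orthonormal basis of $V_x$; 3) there is $X_3\in\mathcal S$ with $\mu(X\setminus X_3)=0$ and a bi-measurable bijection $\Lambda$ from $\{(x,v):x\in X_3,v\in V_x\}$ onto $X_3\times\mathbb R^k$ which covers the identity of $X$ and is a linear isometry on each fiber, i.e. for each $x\in X_3$, $\Lambda(x,\cdot)$ is a linear isometry from $V_x$ onto $\{x\}\times\mathbb R^k$.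
   Context: $\mathrm{Gr}_k(\mathbb R^d)$ is the Grassmannian of $k$-dimensional linear subspaces of $\mathbb R^d$; $\mathbb R^d$ carries its Euclidean inner product and Borel $\sigma$-algebra. The sets $\{(x,v):x\in X_3,v\in V_x\}\subset X\times\mathbb R^d$ and $X_3\times\mathbb R^k$ carry the traces of the product $\sigma$-algebras $\mathcal S\otimes\mathcal B(\mathbb R^d)$ and $\mathcal S\otimes\mathcal B(\mathbb R^k)$; a bijection is bi-measurable if it and its inverse are measurable. *)

From HB Require Import structures.
From mathcomp Require Import all_boot all_order all_algebra.
From mathcomp Require Import all_classical all_reals all_analysis.
Set Implicit Arguments. Unset Strict Implicit. Unset Printing Implicit Defensive.
Import Order.TTheory GRing.Theory Num.Theory.
Import numFieldNormedType.Exports.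
Local Open Scope classical_set_scope.
Local Open Scope ring_scope.

Section Defs.
Variable R : realType.

Definition dotv (d : nat) (u v : 'rV[R]_d) : R := \sum_(i < d) u 0 i * v 0 i.
Definition enorm (d : nat) (v : 'rV[R]_d) : R := Num.sqrt (dotv v v).

(* Borel sigma-algebra on R^d: generated by the open sets (of the standard
   topology of 'rV[R]_d, which is the Euclidean topology). *)
Definition Borel (d : nat) : set (set 'rV[R]_d) := <<s [set O | open O] >>.

Definition Grass (k d : nat) : set (set 'rV[R]_d) :=
  [set V | exists A : 'M[R]_(k, d), \rank A = k /\ V = [set v | (v <= A)%MS]].

Definition orthproj (d : nat) (P : 'M[R]_d) (V : set 'rV[R]_d) : Prop :=
  P^T = P /\ P *m P = P /\ V = [set v | v *m P = v].

(* Open sets of Gr_k(R^d): the standard topology, i.e. the one transported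
   from the space of matrices through V |-> orthogonal projection onto V. *)
Definition GrOpen (k d : nat) : set (set (set 'rV[R]_d)) :=
  [set U | exists O : set 'M[R]_d, open O /\
     U = [set V | @Grass k d V /\ exists P, orthproj P V /\ O P]].

Definition GrBorel (k d : nat) : set (set (set 'rV[R]_d)) :=
  <<s @Grass k d, @GrOpen k d >>.

Definition prod_sigma (d0 : measure_display) (X : measurableType d0) (n : nat)
  : set (set (X * 'rV[R]_n)) :=
  <<s [set C | exists A B, measurable A /\ @Borel n B /\ C = A `*` B] >>.

End Defs.

Arguments Borel R d : clear implicits.
Arguments Grass R k d : clear implicits.
Arguments GrOpen R k d : clear implicits.
Arguments GrBorel R k d : clear implicits.
Arguments prod_sigma R d0 X n : clear implicits.

Definition trace_sigma (T : Type) (D : set T) (M : set (set T)) : set (set T) :=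
  [set D `&` C | C in M].

Definition meas_between (T1 T2 : Type) (D1 : set T1) (M1 : set (set T1))
  (M2 : set (set T2)) (f : T1 -> T2) : Prop :=
  forall B, M2 B -> M1 (D1 `&` f @^-1` B).

From HB Require Import structures.
From mathcomp Require Import all_boot all_order all_algebra.
From mathcomp Require Import all_classical all_reals all_analysis.
From mathcomp Require Import lra measurable_realfun.
Import Order.TTheory GRing.Theory Num.Theory.
Import numFieldNormedType.Exports.
Set Implicit Arguments. Unset Strict Implicit. Unset Printing Implicit Defensive.
Local Open Scope classical_set_scope.
Local Open Scope ring_scope.

(* A k-plane V_x is determined by its orthogonal projection P_x, and the topology of
   Gr_k(R^d) is transported from the matrices P_x, so V is measurable exactly when
   x |-> P_x is; for matrices, Borel measurability is entrywise measurability because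
   rational boxes form a countable base.  Gram-Schmidt applied to the rows of P_x,
   discarding the vectors it reduces to 0, gives an orthonormal basis of V_x built from
   measurable operations.  Conversely an orthonormal frame v gives P_x = M_x^T M_x, where
   M_x has rows v_i(x).  A frame yields the trivialization (x, u) |-> (x, u M_x^T) with
   inverse (x, y) |-> (x, y M_x); a trivialization Lambda yields the frame
   x |-> Lambda^-1(x, e_i), orthonormal because by polarization a linear isometry preserves
   inner products.  Every implication keeps the same exceptional set, so neither the
   measure nor k <= d plays a role. *)

(** * Borel sets of matrices *)

Section borel_mx.
Variable R : realType.

(* For [m = 1] its sigma-algebra is [Borel R n]. *)
Definition borel_mx m n := g_sigma_algebraType [set O : set 'M[R]_(m, n) | open O].

Lemma continuous_mxentry m n i j : continuous (fun M : 'M[R]_(m, n) => M i j).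
Proof.
move=> M B /= /nbhs_ballP[e e0 eB]; apply/nbhs_ballP; exists e => // N [_ MN].
exact: eB (MN i j).
Qed.

Lemma measurable_mxentry m n i j :
  measurable_fun [set: borel_mx m n] (fun M : 'M[R]_(m, n) => M i j).
Proof.
apply: (measurability _ (RGenOpens.measurableE R)) => _ [_ [a [b ->]] <-].
rewrite setTI; apply: sub_sigma_algebra.
exact: (proj1 (continuousP _) (@continuous_mxentry m n i j)) (interval_open _ _).
Qed.

Definition rat_ball m n (c : 'M[rat]_(m, n)) (r : rat) : set 'M[R]_(m, n) :=
  [set M | forall i j, `|M i j - ratr (c i j)| < ratr r].

Lemma open_bigcup_rat_ball m n (O : set 'M[R]_(m, n)) : open O ->
  O = \bigcup_(cr in [set cr | rat_ball cr.1 cr.2 `<=` O]) rat_ball cr.1 cr.2.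
Proof.
move=> oO; apply/seteqP; split => [M OM|N [cr /= sub]]; last exact: sub.
have /nbhs_ballP[e e0 eO] : nbhs M O by exact: open_nbhs_nbhs.
have [r /[!in_itv] /= /andP[r0 re]] :=
  @rat_in_itvoo R 0 (e / 2) (divr_gt0 e0 (ltr0Sn _ 1)).
have [c cM] : exists c : 'M[rat]_(m, n), forall i j, `|M i j - ratr (c i j)| < ratr r.
  have cM ij : exists q : rat, ratr q \in `](M ij.1 ij.2 - ratr r), (M ij.1 ij.2 + ratr r)[.
    by apply: rat_in_itvoo; rewrite ltrBlDr -addrA ltrDl addr_gt0.
  have [c Hc] := choice cM; exists (\matrix_(i, j) c (i, j)) => i j.
  by move: (Hc (i, j)); rewrite mxE in_itv /= ltr_distl => /andP[? ?]; apply/andP; split; lra.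
exists (c, r) => [N /= cN|i j]; last exact: cM.
apply: eO; split => // i j; rewrite /ball /= (splitr e).
rewrite (le_lt_trans (ler_distD (ratr (c i j)) _ _)) // ltrD //.
  move: (cM i j); rewrite !ltr_distl => /andP[? ?].
  by apply/andP; split; lra.
by move: (cN i j); rewrite distrC !ltr_distl => /andP[? ?]; apply/andP; split; lra.
Qed.

End borel_mx.

Lemma dotvE (R : realType) n (u v : 'rV[R]_n) : dotv u v = (u *m v^T) 0 0.
Proof. by rewrite /dotv mxE; apply: eq_bigr => i _; rewrite mxE. Qed.

Section entrywise_measurable.
Context d (T : measurableType d) (R : realType).
Implicit Types (D : set T).

Definition mx_measurable D m n (f : T -> 'M[R]_(m, n)) :=
  forall i j, measurable_fun D (fun x => f x i j).

Lemma mx_measurableP D m n (f : T -> 'M[R]_(m, n)) :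
  mx_measurable D f <-> measurable_fun D (f : T -> borel_mx R m n).
Proof.
split=> [mf|mf i j]; last exact: measurableT_comp (measurable_mxentry i j) mf.
move=> mD; suff : preimage_set_system D f [set O | open O] `<=` measurable.
  by move=> fG; exact: (@measurability _ _ T (borel_mx R m n) D f _ erefl fG mD).
move=> _ [U oU <-].
rewrite (open_bigcup_rat_ball oU) preimage_bigcup setI_bigcupr bigcup_mkcond.
apply: countable_bigcupT_measurable => [|[c r]]; first exact: countableP.
case: ifP => _ //=.
have -> : D `&` f @^-1` rat_ball c r = D `&` \bigcap_(ij in [set: 'I_m * 'I_n])
    (D `&` (fun x => f x ij.1 ij.2) @^-1`
       `](ratr (c ij.1 ij.2) - ratr r), (ratr (c ij.1 ij.2) + ratr r)[).
  apply/seteqP; split=> x [Dx fx]; split=> //.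
    by move=> [i j] _; split=> //=; rewrite in_itv /= -ltr_distl fx.
  by move=> i j; have [_] := fx (i, j) I; rewrite /= in_itv /= -ltr_distl.
apply: measurableI => //.
apply: (@fin_bigcap_measurable _ T _ [set: 'I_m * 'I_n]) => [|ij _]; first exact: finite_finset.
exact: mf mD _ (measurable_itv _).
Qed.

Lemma mx_measurable_cst D m n (c : 'M[R]_(m, n)) : mx_measurable D (fun=> c).
Proof. by move=> i j; exact: measurable_cst. Qed.

Lemma mx_measurableD D m n (f g : T -> 'M[R]_(m, n)) :
  mx_measurable D f -> mx_measurable D g -> mx_measurable D (fun x => f x + g x).
Proof. by move=> mf mg i j; under eq_fun do rewrite mxE; exact: measurable_funD. Qed.

Lemma mx_measurableN D m n (f : T -> 'M[R]_(m, n)) :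
  mx_measurable D f -> mx_measurable D (fun x => - f x).
Proof. by move=> mf i j; under eq_fun do rewrite mxE; exact: measurable_funN. Qed.

Lemma mx_measurableZ D m n (a : T -> R) (f : T -> 'M[R]_(m, n)) :
  measurable_fun D a -> mx_measurable D f -> mx_measurable D (fun x => a x *: f x).
Proof. by move=> ma mf i j; under eq_fun do rewrite mxE; exact: measurable_funM. Qed.

Lemma mx_measurable_sum D m n I (s : seq I) (F : I -> T -> 'M[R]_(m, n)) :
  (forall l, mx_measurable D (F l)) -> mx_measurable D (fun x => \sum_(l <- s) F l x).
Proof.
by move=> mF i j; under eq_fun do rewrite summxE; apply: measurable_sum => l; exact: mF.
Qed.

Lemma mx_measurable_mul D m n p (f : T -> 'M[R]_(m, n)) (g : T -> 'M[R]_(n, p)) :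
  mx_measurable D f -> mx_measurable D g -> mx_measurable D (fun x => f x *m g x).
Proof.
move=> mf mg i j; under eq_fun do rewrite mxE.
by apply: measurable_sum => l; exact: measurable_funM.
Qed.

Lemma mx_measurable_tr D m n (f : T -> 'M[R]_(m, n)) :
  mx_measurable D f -> mx_measurable D (fun x => (f x)^T).
Proof. by move=> mf i j; under eq_fun do rewrite mxE; exact: mf. Qed.

Lemma mx_measurable_rows D k n (v : 'I_k -> T -> 'rV[R]_n) :
  (forall i, mx_measurable D (v i)) -> mx_measurable D (fun x => \matrix_i v i x).
Proof. by move=> mv i j; under eq_fun do rewrite mxE; exact: mv. Qed.

Lemma measurable_dotv D n (f g : T -> 'rV[R]_n) :
  mx_measurable D f -> mx_measurable D g -> measurable_fun D (fun x => dotv (f x) (g x)).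
Proof.
move=> mf mg; under eq_fun do rewrite dotvE.
exact: mx_measurable_mul mf (mx_measurable_tr mg) 0 0.
Qed.

End entrywise_measurable.

(** * Inner products, orthonormal rows and orthogonal projections *)

Section inner_product.
Variable R : realType.
Implicit Types (n : nat) (a : R).

Lemma dotvC n (u v : 'rV[R]_n) : dotv u v = dotv v u.
Proof. by apply: eq_bigr => i _; rewrite mulrC. Qed.

Lemma dotvDl n (u v w : 'rV[R]_n) : dotv (u + v) w = dotv u w + dotv v w.
Proof. by rewrite !dotvE mulmxDl mxE. Qed.

Lemma dotvZl n a (u w : 'rV[R]_n) : dotv (a *: u) w = a * dotv u w.
Proof. by rewrite !dotvE -scalemxAl mxE. Qed.

Lemma dotvBl n (u v w : 'rV[R]_n) : dotv (u - v) w = dotv u w - dotv v w.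
Proof. by rewrite dotvDl -scaleN1r dotvZl mulN1r. Qed.

Lemma dotvDr n (u v w : 'rV[R]_n) : dotv w (u + v) = dotv w u + dotv w v.
Proof. by rewrite dotvC dotvDl !(dotvC w). Qed.

Lemma dotvZr n a (u w : 'rV[R]_n) : dotv w (a *: u) = a * dotv w u.
Proof. by rewrite dotvC dotvZl dotvC. Qed.

Lemma dotv0l n (u : 'rV[R]_n) : dotv 0 u = 0.
Proof. by rewrite dotvE mul0mx mxE. Qed.

Lemma dotv0r n (u : 'rV[R]_n) : dotv u 0 = 0.
Proof. by rewrite dotvC dotv0l. Qed.

Lemma dotv_suml n I (r : seq I) (F : I -> 'rV[R]_n) w :
  dotv (\sum_(i <- r) F i) w = \sum_(i <- r) dotv (F i) w.
Proof. by elim/big_rec2: _ => [|i a b _ <-]; rewrite ?dotv0l ?dotvDl. Qed.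

Lemma dotv_ge0 n (u : 'rV[R]_n) : 0 <= dotv u u.
Proof. by rewrite sumr_ge0 // => i _; rewrite -expr2 sqr_ge0. Qed.

Lemma dotv_eq0 n (u : 'rV[R]_n) : (dotv u u == 0) = (u == 0).
Proof.
apply/idP/eqP => [|->]; last by rewrite dotv0l.
rewrite psumr_eq0 => [/allP u0|i _]; last by rewrite -expr2 sqr_ge0.
apply/rowP => i; rewrite mxE; apply/eqP.
by have := u0 i (mem_index_enum i); rewrite implyTb mulf_eq0 orbb.
Qed.

Lemma dotv_polarization n (u w : 'rV[R]_n) :
  dotv u w = (dotv (u + w) (u + w) - dotv u u - dotv w w) / 2.
Proof. by rewrite !dotvDl !dotvDr (dotvC w u); lra. Qed.

Lemma dotv_delta k (i j : 'I_k) :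
  dotv (delta_mx 0 i : 'rV[R]_k) (delta_mx 0 j) = (i == j)%:R.
Proof.
rewrite /dotv (bigD1 i) //= big1 ?addr0 => [|l li].
  by rewrite !mxE !eqxx /= mul1r eq_sym.
by rewrite !mxE (negbTE li) andbF mul0r.
Qed.

End inner_product.

Section orthonormal_rows.
Variable R : realType.

Definition orthonormal_family k n (v : 'I_k -> 'rV[R]_n) :=
  forall i j, dotv (v i) (v j) = (i == j)%:R.

Lemma orthonormal_mulmx_tr k n (v : 'I_k -> 'rV[R]_n) :
  orthonormal_family v -> \matrix_i v i *m (\matrix_i v i)^T = 1%:M.
Proof.
move=> vON; apply/matrixP => i j.
rewrite [RHS]mxE -[_ *+ _]/((i == j)%:R) -vON /dotv mxE.
by apply: eq_bigr => l _; rewrite !mxE.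
Qed.

Variables (k n : nat) (M : 'M[R]_(k, n)).
Hypothesis MON : M *m M^T = 1%:M.

Lemma mxrank_orthonormal : \rank M = k.
Proof.
by apply/eqP; rewrite eqn_leq rank_leq_row -{1}(mxrank1 R k) -MON mxrankM_maxl.
Qed.

Lemma orthonormal_trK (y : 'rV[R]_k) : y *m M *m M^T = y.
Proof. by rewrite -mulmxA MON mulmx1. Qed.

Lemma orthonormal_sub_trK (u : 'rV[R]_n) : (u <= M)%MS -> u *m M^T *m M = u.
Proof. by move=> /submxP[y ->]; rewrite orthonormal_trK. Qed.

Lemma orthonormal_dotv_tr (u : 'rV[R]_n) : (u <= M)%MS ->
  dotv (u *m M^T) (u *m M^T) = dotv u u.
Proof.
move=> /submxP[y ->]; rewrite orthonormal_trK !dotvE trmx_mul mulmxA.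
by rewrite -(mulmxA y) MON mulmx1.
Qed.

Lemma orthproj_orthonormal : orthproj (M^T *m M) [set u | (u <= M)%MS].
Proof.
split; first by rewrite trmx_mul trmxK.
split; first by rewrite mulmxA -(mulmxA M^T) MON mulmx1.
apply/seteqP; split => u /=; first by rewrite mulmxA => /orthonormal_sub_trK.
by move=> <-; rewrite mulmxA submxMl.
Qed.

End orthonormal_rows.

Section orthogonal_projection.
Variable R : realType.

Lemma orthproj_span n (P : 'M[R]_n) V : orthproj P V -> V = [set u | (u <= P)%MS].
Proof.
move=> [_ [PP ->]]; apply/seteqP; split => u /=; first by move=> <-; exact: submxMl.
by move=> /submxP[y ->]; rewrite -mulmxA PP.
Qed.

Lemma orthproj_uniq n (P Q : 'M[R]_n) V : orthproj P V -> orthproj Q V -> P = Q.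
Proof.
have mulmx_proj P' Q' : orthproj P' V -> orthproj Q' V -> P' *m Q' = P'.
  move=> P'V [_ [_ QV]]; apply/row_matrixP => i; rewrite row_mul.
  have : V (row i P') by rewrite (orthproj_span P'V) /=; exact: row_sub.
  by rewrite QV.
move=> PV QV; have [PT _] := PV; have [QT _] := QV.
by rewrite -PT -(mulmx_proj _ _ PV QV) trmx_mul PT QT mulmx_proj.
Qed.

Lemma Grass_orthproj k n (V : set 'rV[R]_n) : Grass R k n V -> exists P, orthproj P V.
Proof.
move=> [A [rkA ->]].
have AAT_unit : A *m A^T \in unitmx.
  rewrite -row_free_unit; apply: inj_row_free => w wAAT0.
  have : dotv (w *m A) (w *m A) = 0.
    by rewrite dotvE trmx_mul mulmxA -(mulmxA w) wAAT0 mul0mx mxE.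
  by move/eqP; rewrite dotv_eq0 mulmx_free_eq0 ?/row_free ?rkA // => /eqP.
exists (A^T *m invmx (A *m A^T) *m A); split.
  by rewrite !trmx_mul trmxK trmx_inv trmx_mul trmxK mulmxA.
split; first by rewrite -!mulmxA (mulmxA A) (mulmxA (A *m A^T)) mulmxV // mul1mx.
apply/seteqP; split => u /=; last by move=> <-; rewrite mulmxA submxMl.
by move=> /submxP[y ->]; rewrite !mulmxA -(mulmxA y A) -(mulmxA y) mulmxV // mulmx1.
Qed.

End orthogonal_projection.

(** * Orthonormal bases *)

Section gram_schmidt.
Variables (R : realType) (n : nat).
Implicit Types (s : seq 'rV[R]_n) (b w : 'rV[R]_n).

Definition seqmx s : 'M[R]_(size s, n) := \matrix_(i < size s) s`_i.

Lemma seqmx_sub s m (B : 'M[R]_(m, n)) : (seqmx s <= B)%MS = all (submx^~ B) s.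
Proof.
apply/row_subP/allP => [sB e /(nthP 0)[i ilt <-]|sB i].
  by have := sB (Ordinal ilt); rewrite rowK.
by rewrite rowK sB ?mem_nth.
Qed.

Lemma mem_seqmx s e : e \in s -> (e <= seqmx s)%MS.
Proof. by move=> es; move: (submx_refl (seqmx s)); rewrite seqmx_sub => /allP; apply. Qed.

Lemma sum_seqmx_sub s m (B : 'M[R]_(m, n)) (c : 'rV[R]_n -> R) :
  (seqmx s <= B)%MS -> ((\sum_(e <- s) c e *: e)%R <= B)%MS.
Proof.
rewrite seqmx_sub => /allP sB; rewrite big_seq.
by apply: summx_sub => e es; rewrite scalemx_sub ?sB.
Qed.

Definition orthonormal_seq s :=
  forall i j, (i < size s)%N -> (j < size s)%N -> dotv s`_i s`_j = (i == j)%:R.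

Lemma orthonormal_seqmx s : orthonormal_seq s -> seqmx s *m (seqmx s)^T = 1%:M.
Proof. by move=> sON; apply: orthonormal_mulmx_tr => i j; exact: sON. Qed.

(* Since [0^-1 = 0], [normalize 0 = 0]: Gram-Schmidt below turns every vector
   depending linearly on its predecessors into [0] instead of failing. *)
Definition normalize w := (Num.sqrt (dotv w w))^-1 *: w.

Definition residual s b := b - \sum_(e <- s) dotv b e *: e.

Definition gram_schmidt s :=
  foldl (fun g b => rcons g (normalize (residual g b))) [::] s.

Definition orthonormal0 s := forall i j, (i < size s)%N -> (j < size s)%N ->
  dotv s`_i s`_j = ((i == j) && (s`_i != 0))%:R.

Lemma normalizeK w : Num.sqrt (dotv w w) *: normalize w = w.
Proof.
have [->|w0] := eqVneq w 0; first by rewrite /normalize !scaler0.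
by rewrite scalerA mulfV ?scale1r // sqrtr_eq0 -ltNge lt_def dotv_eq0 w0 dotv_ge0.
Qed.

Lemma normalize_eq0 w : (normalize w == 0) = (w == 0).
Proof.
apply/eqP/eqP => [w0|->]; last by rewrite /normalize scaler0.
by rewrite -[w]normalizeK w0 scaler0.
Qed.

Lemma dotv_normalize w : dotv (normalize w) (normalize w) = (w != 0)%:R.
Proof.
have [->|w0] := eqVneq w 0; first by rewrite /normalize scaler0 dotv0l.
rewrite dotvZl dotvZr mulrA -expr2 exprVn sqr_sqrtr ?dotv_ge0 // mulVf //.
by rewrite dotv_eq0.
Qed.

Lemma residual_orthogonal s b i : orthonormal0 s -> (i < size s)%N ->
  dotv (residual s b) s`_i = 0.
Proof.
move=> sON ilt; rewrite dotvBl dotv_suml (big_nth 0) big_mkord.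
rewrite (bigD1 (Ordinal ilt)) //= big1 ?addr0 => [|j ji]; last first.
  by rewrite -val_eqE /= in ji; rewrite dotvZl sON // (negbTE ji) mulr0.
rewrite dotvZl sON // eqxx /=; have [->|_] := eqVneq s`_i 0.
  by rewrite dotv0r mul0r subr0.
by rewrite mulr1 subrr.
Qed.

Lemma gram_schmidt_rcons s b : gram_schmidt (rcons s b) =
  rcons (gram_schmidt s) (normalize (residual (gram_schmidt s) b)).
Proof. by rewrite /gram_schmidt -cats1 foldl_cat. Qed.

Lemma size_gram_schmidt s : size (gram_schmidt s) = size s.
Proof. by elim/last_ind: s => // s b IH; rewrite gram_schmidt_rcons !size_rcons IH. Qed.

Lemma gram_schmidt_orthonormal0 s : orthonormal0 (gram_schmidt s).
Proof.
elim/last_ind: s => [i j //|s b IH]; rewrite gram_schmidt_rcons.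
set g := gram_schmidt s; set y := normalize _.
have yg i : (i < size g)%N -> dotv y g`_i = 0.
  by move=> ilt; rewrite /y /normalize dotvZl residual_orthogonal ?mulr0.
move=> i j; rewrite size_rcons !ltnS !nth_rcons (leq_eqVlt i) (leq_eqVlt j).
case/orP=> [/eqP->|ilt]; case/orP=> [/eqP->|jlt].
- by rewrite ltnn eqxx dotv_normalize normalize_eq0.
- by rewrite ltnn eqxx jlt yg // eq_sym (ltn_eqF jlt).
- by rewrite ilt ltnn eqxx dotvC yg // (ltn_eqF ilt).
- by rewrite ilt jlt; exact: IH.
Qed.

Lemma gram_schmidt_span s : (seqmx (gram_schmidt s) == seqmx s)%MS.
Proof.
elim/last_ind: s => [|s b /andP[gs sg]]; first by rewrite !seqmx_sub.
have sub_rcons t e : (seqmx t <= seqmx (rcons t e))%MS.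
  by rewrite seqmx_sub; apply/allP => f ft; rewrite mem_seqmx // mem_rcons inE ft orbT.
have last_rcons t e : (e <= seqmx (rcons t e))%MS by rewrite mem_seqmx // mem_rcons mem_head.
rewrite gram_schmidt_rcons; set g := gram_schmidt s; set r := residual g b.
have gsb := submx_trans gs (sub_rcons s b).
have sgr := submx_trans sg (sub_rcons g (normalize r)).
apply/andP; split; rewrite seqmx_sub all_rcons -seqmx_sub ?gsb ?sgr andbT.
  rewrite /normalize scalemx_sub // /r /residual addmx_sub ?last_rcons //.
  by rewrite -scaleN1r scalemx_sub // sum_seqmx_sub.
have -> : b = Num.sqrt (dotv r r) *: normalize r + \sum_(e <- g) dotv b e *: e.
  by rewrite normalizeK subrK.
by apply: addmx_sub; [exact/scalemx_sub/last_rcons | exact: sum_seqmx_sub].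
Qed.

Definition onbasis s := [seq e <- gram_schmidt s | e != 0].

Lemma onbasis_orthonormal s : orthonormal_seq (onbasis s).
Proof.
have gON := @gram_schmidt_orthonormal0 s.
have unit_norm e : e \in onbasis s -> dotv e e = 1.
  rewrite mem_filter => /andP[e0 /(nthP 0)[i ilt ie]].
  by rewrite -ie gON // eqxx ie e0.
have : pairwise (fun e f => dotv e f == 0) (onbasis s).
  apply/pairwise_filter/(pairwiseP 0) => i j ilt jlt ij.
  by rewrite gON // (ltn_eqF ij).
move=> /(pairwiseP 0) orth i j ilt jlt.
case: (ltngtP i j) => [ij|ji|<-]; last by rewrite unit_norm ?mem_nth.
  by apply/eqP; exact: orth.
by rewrite dotvC; apply/eqP; exact: orth.
Qed.

Lemma onbasis_span s : (seqmx (onbasis s) == seqmx s)%MS.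
Proof.
apply/eqmxP; apply: eqmx_trans (eqmxP (gram_schmidt_span s)).
apply/eqmxP/andP; split; rewrite seqmx_sub.
  by apply/allP => e; rewrite mem_filter => /andP[_ /mem_seqmx].
apply/allP => e es; have [->|e0] := eqVneq e 0; first exact: sub0mx.
by rewrite mem_seqmx // mem_filter e0.
Qed.

End gram_schmidt.

Section orthonormal_basis.
Variables (R : realType) (n : nat).

Definition rows m (P : 'M[R]_(m, n)) := [seq row i P | i <- enum 'I_m].

Lemma seqmx_rows m (P : 'M[R]_(m, n)) : (seqmx (rows P) == P)%MS.
Proof.
apply/andP; split; rewrite ?seqmx_sub; first by apply/allP => _ /mapP[i _ ->]; exact: row_sub.
by apply/row_subP => i; apply/mem_seqmx/(map_f (fun j => row j P)); rewrite mem_enum.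
Qed.

Lemma eq_submx_set m1 m2 (A : 'M[R]_(m1, n)) (B : 'M[R]_(m2, n)) :
  [set u : 'rV_n | (u <= A)%MS] = [set u | (u <= B)%MS] <-> (A == B)%MS.
Proof.
split=> [AB|/eqmxP AB]; last by apply/seteqP; split=> u /=; rewrite AB.
apply/andP; split; apply/row_subP => i.
  by have /= <- := congr1 (@^~ (row i A)) AB; exact: row_sub.
by have /= -> := congr1 (@^~ (row i B)) AB; exact: row_sub.
Qed.

Lemma Grass_onbasis k (V : set 'rV[R]_n) (P : 'M[R]_n) : Grass R k n V -> orthproj P V ->
  orthonormal_family (fun i : 'I_k => (onbasis (rows P))`_i) /\
  V = [set u | (u <= \matrix_(i < k) (onbasis (rows P))`_i)%MS].
Proof.
move=> [A [rkA VA]] /orthproj_span VP; set t := onbasis (rows P).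
have tON : orthonormal_seq t by exact: onbasis_orthonormal.
have tP : (seqmx t == P)%MS.
  by apply/eqmxP; apply: eqmx_trans (eqmxP (seqmx_rows P)); exact/eqmxP/onbasis_span.
have Vt : V = [set u | (u <= seqmx t)%MS] by rewrite VP; apply/eq_submx_set/eqmxP/eqmx_sym/eqmxP.
have <- : size t = k.
  rewrite -(mxrank_orthonormal (orthonormal_seqmx tON)) -rkA.
  by apply/eqmx_rank/eq_submx_set; rewrite -Vt.
by split=> // i j; exact: tON.
Qed.

End orthonormal_basis.

Section fiberwise_isometry.
Variables (R : realType) (k n m : nat) (A : 'M[R]_(m, n)).
Variables (phi : 'rV[R]_n -> 'rV[R]_k) (psi : 'rV[R]_k -> 'rV[R]_n).
Let W := [set u : 'rV[R]_n | (u <= A)%MS].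
Hypothesis phi_linear :
  forall a u w, W u -> W w -> phi (a *: u + w) = a *: phi u + phi w.
Hypothesis phi_isometry : forall u, W u -> enorm (phi u) = enorm u.
Hypothesis psiW : forall y, W (psi y).
Hypothesis psiK : cancel psi phi.
Hypothesis phiK : forall u, W u -> psi (phi u) = u.

Let W_lin a u w : W u -> W w -> W (a *: u + w).
Proof. by move=> Wu Ww; rewrite /W /= addmx_sub ?scalemx_sub. Qed.

Lemma dotv_psi y1 y2 : dotv (psi y1) (psi y2) = dotv y1 y2.
Proof.
have dotv_psi_diag y : dotv (psi y) (psi y) = dotv y y.
  have := phi_isometry (psiW y); rewrite psiK /enorm => /(congr1 (fun r => r ^+ 2)).
  by rewrite !sqr_sqrtr ?dotv_ge0.
have psiD : psi y1 + psi y2 = psi (y1 + y2).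
  rewrite -[LHS]phiK; last by rewrite -[psi y1]scale1r; exact: W_lin.
  by rewrite -[psi y1]scale1r phi_linear // !psiK scale1r.
by rewrite dotv_polarization [RHS]dotv_polarization psiD !dotv_psi_diag.
Qed.

Lemma isometry_orthonormal_basis :
  orthonormal_family (fun i => psi (delta_mx 0 i)) /\
  W = [set u | (u <= \matrix_(i < k) psi (delta_mx 0 i))%MS].
Proof.
split=> [i j|]; first by rewrite dotv_psi dotv_delta.
set M := \matrix_i psi (delta_mx 0 i).
apply/seteqP; split=> u /= Wu; last first.
  by apply: submx_trans Wu _; apply/row_subP => i; rewrite rowK; exact: psiW.
have phi0 : phi 0 = 0.
  have := phi_linear 1 (sub0mx _ A) (sub0mx _ A); rewrite !scale1r addr0 => phi00.
  by apply: (@addrI _ (phi 0)); rewrite addr0 -phi00.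
have psi_sum (y : 'rV[R]_k) : W (\sum_i y 0 i *: psi (delta_mx 0 i)) /\
    phi (\sum_i y 0 i *: psi (delta_mx 0 i)) = \sum_i y 0 i *: delta_mx 0 i.
  elim/big_rec2: _ => [|i a b _ [Wa <-]]; first by split; [exact: sub0mx|].
  by split; [exact: W_lin|rewrite phi_linear // psiK].
have [Wsum phisum] := psi_sum (phi u).
have -> : u = \sum_i phi u 0 i *: row i M.
  under eq_bigr do rewrite rowK.
  by rewrite -{1}(phiK Wu) -(phiK Wsum) phisum -row_sum_delta.
by rewrite -mulmx_sum_row submxMl.
Qed.

End fiberwise_isometry.

(** * Measurability of Gram-Schmidt *)

Lemma measurable_inv (R : realType) : measurable_fun [set: R] (fun x : R => x^-1).
Proof.
move=> _ B mB; rewrite setTI.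
have mN0 : measurable [set x : R | x != 0] by apply: open_measurable; exact: open_neq.
have -> : (fun x : R => x^-1) @^-1` B =
    ([set x : R | x != 0] `&` (fun x : R => x^-1) @^-1` B) `|`
    ([set 0] `&` (fun x : R => x^-1) @^-1` B).
  apply/seteqP; split=> [x Bx|x [] []] //.
  by have [x0|x0] := eqVneq x 0; [right|left]; split.
apply: measurableU.
  have inv_cont : {in [set x : R | x != 0], continuous (fun x : R => x^-1)}.
    by move=> x; rewrite inE => x0; exact: inv_continuous.
  exact: (open_continuous_measurable_fun (@open_neq R 0) inv_cont mN0 mB).
have [B0|B0] := pselect (B 0).
  rewrite (_ : _ `&` _ = [set 0]); first exact: measurable_set1.
  by apply/seteqP; split=> [x []|x /= ->] //; rewrite invr0.
by rewrite (_ : _ `&` _ = set0) //; apply/seteqP; split=> x // [/= ->]; rewrite invr0.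
Qed.

Lemma seq_enum_ord T (x0 : T) n (s : seq T) :
  size s = n -> s = [seq nth x0 s j | j : 'I_n <- enum 'I_n].
Proof. by move=> <-; rewrite -[in LHS](mkseq_nth x0 s) /mkseq -val_enum_ord -map_comp. Qed.

Section measurable_gram_schmidt.
Context d (T : measurableType d) (R : realType).
Implicit Types (D : set T).

Lemma mx_measurable_normalize D n (f : T -> 'rV[R]_n) :
  mx_measurable D f -> mx_measurable D (fun x => normalize (f x)).
Proof.
move=> mf; apply: mx_measurableZ (mf); apply: measurableT_comp (@measurable_inv R) _.
have msqrt := continuous_measurable_fun (@sqrt_continuous R).
exact: measurableT_comp msqrt (measurable_dotv mf mf).
Qed.

Lemma mx_measurable_nth_map D m n I (s : seq I) (G : I -> T -> 'M[R]_(m, n)) t :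
  (forall i, mx_measurable D (G i)) -> mx_measurable D (fun x => [seq G i x | i <- s]`_t).
Proof.
move=> mG; elim: s t => [|i s IH] [|t] /=; rewrite ?nth_nil //; exact: mx_measurable_cst.
Qed.

Lemma mx_measurable_gram_schmidt D n I (s : seq I) (G : I -> T -> 'rV[R]_n) t :
  (forall i, mx_measurable D (G i)) ->
  mx_measurable D (fun x => (gram_schmidt [seq G i x | i <- s])`_t).
Proof.
move=> mG; elim/last_ind: s t => [|s i IH] t.
  by under eq_fun do rewrite nth_nil; exact: mx_measurable_cst.
under eq_fun do rewrite map_rcons gram_schmidt_rcons nth_rcons size_gram_schmidt size_map.
case: (t < size s)%N; first exact: IH.
case: (t == size s)%N; last exact: mx_measurable_cst.
apply/mx_measurable_normalize/mx_measurableD/mx_measurableN => //.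
under eq_fun do rewrite (big_nth 0) size_gram_schmidt size_map big_mkord.
apply: mx_measurable_sum => j; apply: mx_measurableZ; last exact: IH.
by apply: measurable_dotv; [exact: mG|exact: IH].
Qed.

Lemma measurable_mx_eq D m n (f : T -> 'M[R]_(m, n)) c : measurable D ->
  mx_measurable D f -> measurable (D `&` [set x | f x = c]).
Proof.
move=> mD mf.
have -> : D `&` [set x | f x = c] =
    D `&` \bigcap_(ij in [set: 'I_m * 'I_n])
      (D `&` (fun x => f x ij.1 ij.2) @^-1` [set c ij.1 ij.2]).
  apply/seteqP; split=> x [Dx fx]; split=> //=; first by move=> ij _; split=> //=; rewrite fx.
  by apply/matrixP => i j; have [] := fx (i, j) Logic.I.
apply: measurableI => //; apply: fin_bigcap_measurable => [|ij _]; first exact: finite_finset.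
exact: mf mD _ (measurable_set1 _).
Qed.

Lemma measurable_mx_neq0 D m n (f : T -> 'M[R]_(m, n)) b : measurable D ->
  mx_measurable D f -> measurable (D `&` [set x | (f x != 0) = b]).
Proof.
move=> mD mf; have m0 := measurable_mx_eq 0 mD mf; case: b.
  rewrite (_ : _ `&` _ = D `\` (D `&` [set x | f x = 0])); first exact: measurableD.
  apply/seteqP; split=> x [Dx /= fx0]; split=> //; first by move=> [_ /eqP]; rewrite (negbTE fx0).
  by apply/eqP => fx0'; apply: fx0.
rewrite (_ : _ `&` _ = D `&` [set x | f x = 0]) //.
by apply/seteqP; split=> x [Dx /=]; [move=> /negbFE/eqP|move=> ->; rewrite eqxx].
Qed.

Lemma mx_measurable_cases D (F : finType) (c : T -> F) m n (h : F -> T -> 'M[R]_(m, n)) :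
  (forall S, measurable (D `&` [set x | c x = S])) -> (forall S, mx_measurable D (h S)) ->
  mx_measurable D (fun x => h (c x) x).
Proof.
move=> mc mh i j mD B mB.
have -> : D `&` (fun x => h (c x) x i j) @^-1` B =
    \bigcup_(S in [set: F]) ((D `&` [set x | c x = S]) `&` (D `&` (fun x => h S x i j) @^-1` B)).
  apply/seteqP; split=> [x [Dx hx]|x [S _ [[Dx <-] [_ hx]]]] //.
  by exists (c x) => //; split.
apply: fin_bigcup_measurable => [|S _]; first exact: finite_finset.
by apply: measurableI; [exact: mc|exact: mh].
Qed.

Lemma mx_measurable_nth_nonzero D (I : finType) m n (g : I -> T -> 'M[R]_(m, n)) t :
  measurable D -> (forall i, mx_measurable D (g i)) ->
  mx_measurable D (fun x => [seq y <- [seq g i x | i <- enum I] | y != 0]`_t).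
Proof.
(* The selection depends on [x] only through the finite pattern [c x]. *)
move=> mD mg; pose c x := [ffun i => g i x != 0].
have -> : (fun x => [seq y <- [seq g i x | i <- enum I] | y != 0]`_t) =
    (fun x => [seq g i x | i <- enum I & c x i]`_t).
  apply/funext => x; rewrite filter_map; congr (_`_t); congr map.
  by apply: eq_filter => i; rewrite ffunE.
apply: (mx_measurable_cases (c := c) (h := fun S x => [seq g i x | i <- enum I & S i]`_t)) => S.
  have -> : D `&` [set x | c x = S] =
      D `&` \bigcap_(i in [set: I]) (D `&` [set x | (g i x != 0) = S i]).
    apply/seteqP; split=> x [Dx cx]; split=> //=.
      by move=> i _; rewrite -cx ffunE.
    by apply/ffunP => i; have [] := cx i Logic.I; rewrite ffunE.
  apply: measurableI => //; apply: fin_bigcap_measurable => [|i _]; first exact: finite_finset.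
  exact: measurable_mx_neq0.
exact: mx_measurable_nth_map.
Qed.

End measurable_gram_schmidt.

(** * Traces and product sigma-algebras *)

Section trace_measurable.
Context d (X : measurableType d).

Lemma trace_measurableP (D S : set X) : measurable D ->
  trace_sigma D measurable S <-> measurable S /\ S `<=` D.
Proof.
move=> mD; split=> [[C mC <-]|[mS SD]]; first by split; [exact: measurableI|move=> x []].
by exists S => //; apply/seteqP; split=> [x []|x Sx] //; split=> //; exact: SD.
Qed.

Lemma meas_between_measurableP d' (Y : measurableType d') (D : set X) (f : X -> Y) :
  measurable D -> meas_between D (trace_sigma D measurable) measurable f <-> measurable_fun D f.
Proof.
move=> mD; split=> [mf _ B /mf /trace_measurableP[]//|mf B mB].
by apply/trace_measurableP => //; split=> [|x []]; [exact: mf|].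
Qed.

Lemma meas_between_BorelP (R : realType) (D : set X) n (f : X -> 'rV[R]_n) :
  measurable D -> meas_between D (trace_sigma D measurable) (Borel R n) f <-> mx_measurable D f.
Proof.
move=> mD; rewrite mx_measurableP.
exact: (@meas_between_measurableP _ (borel_mx R 1 n)).
Qed.

End trace_measurable.

Section product_measurability.
Context d0 (X : measurableType d0) (R : realType).

Definition prod_rects n : set (set (X * 'rV[R]_n)) :=
  [set C | exists A B, measurable A /\ Borel R n B /\ C = A `*` B].

(* Its sigma-algebra is [prod_sigma R d0 X n]. *)
Definition prod_mx n := g_sigma_algebraType (@prod_rects n).

Lemma measurable_prod_rect n (A : set X) (B : set 'rV[R]_n) :
  measurable A -> Borel R n B -> measurable (A `*` B : set (prod_mx n)).
Proof. by move=> mA mB; apply: sub_sigma_algebra; exists A, B. Qed.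

Lemma Borel_setT n : Borel R n setT.
Proof. exact: (@measurableT _ (borel_mx R 1 n)). Qed.

Lemma measurable_fst_setX n (D : set X) : measurable D ->
  measurable_fun (D `*` setT : set (prod_mx n)) fst.
Proof.
move=> mD _ A mA; rewrite (_ : _ `&` _ = (D `&` A) `*` setT).
  by apply: measurable_prod_rect; [exact: measurableI|exact: Borel_setT].
by apply/seteqP; split=> -[x u] /= [[]].
Qed.

Lemma mx_measurable_fst n (D : set X) m p (f : X -> 'M[R]_(m, p)) :
  measurable D -> mx_measurable D f ->
  mx_measurable (D `*` setT : set (prod_mx n)) (fun q => f q.1).
Proof.
move=> mD mf i j _ B mB; rewrite (_ : _ `&` _ = (D `&` (fun x => f x i j) @^-1` B) `*` setT).
  by apply: measurable_prod_rect; [exact: mf|exact: Borel_setT].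
by apply/seteqP; split=> -[x u] /= [[]].
Qed.

Lemma mx_measurable_snd n (D : set (prod_mx n)) : mx_measurable D snd.
Proof.
move=> i j; apply: (measurable_funTS (T1 := prod_mx n)) => _ B mB; rewrite setTI.
rewrite (_ : _ @^-1` _ = setT `*` ((fun u : 'rV[R]_n => u i j) @^-1` B)).
  apply: measurable_prod_rect => //.
  by have := measurable_mxentry i j measurableT mB; rewrite setTI.
by apply/seteqP; split=> -[x u] //= [].
Qed.

Lemma measurable_fun_prod_mx d' (T : measurableType d') (D : set T) n
    (h : T -> X * 'rV[R]_n) :
  measurable_fun D (fun t => (h t).1) -> mx_measurable D (fun t => (h t).2) ->
  measurable_fun D (h : T -> prod_mx n).
Proof.
move=> h1 /mx_measurableP h2 mD.
suff : preimage_set_system D h (@prod_rects n) `<=` measurable.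
  by move=> hG; exact: (@measurability _ _ T (prod_mx n) D h _ erefl hG mD).
move=> _ [_ [A [B [mA [mB ->]]]] <-].
rewrite (_ : _ `&` _ = (D `&` (fun t => (h t).1) @^-1` A) `&` (D `&` (fun t => (h t).2) @^-1` B)).
  by apply: measurableI; [exact: h1|exact: h2].
by apply/seteqP; split=> t /=; [move=> [Dt [hA hB]]|move=> [[Dt hA] [_ hB]]].
Qed.

Lemma meas_between_trace n m (D : set (prod_mx n)) (E : set (X * 'rV[R]_n))
    (F : set (X * 'rV[R]_m)) (h : prod_mx n -> prod_mx m) :
  measurable D -> E `<=` D -> measurable_fun D h -> (forall p, E p -> F (h p)) ->
  meas_between E (trace_sigma E (prod_sigma R d0 X n))
                 (trace_sigma F (prod_sigma R d0 X m)) h.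
Proof.
move=> mD ED mh EF _ [C mC <-]; exists (D `&` h @^-1` C); first exact: mh.
apply/seteqP; split=> p /=; first by move=> [Ep [Dp Cp]]; do !split => //; exact: EF.
by move=> [Ep [_ Cp]]; do !split => //; exact: ED.
Qed.

Lemma meas_between_section (D : set X) n m (E : set (X * 'rV[R]_m))
    (h : X * 'rV[R]_n -> X * 'rV[R]_m) (y : 'rV[R]_n) :
  measurable D -> (forall x, D x -> E (h (x, y))) ->
  meas_between (D `*` setT) (trace_sigma (D `*` setT) (prod_sigma R d0 X n))
               (trace_sigma E (prod_sigma R d0 X m)) h ->
  meas_between D (trace_sigma D measurable) (Borel R m) (fun x => (h (x, y)).2).
Proof.
move=> mD Eh mh B mB; apply/trace_measurableP => //; split=> [|x []//].
have [C mC hC] : trace_sigma E (prod_sigma R d0 X m) (E `&` (setT `*` B)).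
  by exists (setT `*` B) => //; exact: measurable_prod_rect.
have [C' mC' hC'] := mh _ (ex_intro2 _ _ C mC erefl).
have -> : D `&` (fun x => (h (x, y)).2) @^-1` B = D `&` (fun x => (x, y)) @^-1` C'.
  apply/seteqP; split=> x [Dx hx]; split=> //.
    have : ((D `*` setT) `&` h @^-1` (E `&` C)) (x, y) by rewrite hC; do !split => //; exact: Eh.
    by rewrite -hC' => -[].
  have : ((D `*` setT) `&` C') (x, y) by [].
  by rewrite hC' hC => -[_ [_ []]].
have mxy : measurable_fun setT (fun x => (x, y) : prod_mx n).
  by apply: measurable_fun_prod_mx => /=; [exact: measurable_id|exact: mx_measurable_cst].
by apply: measurableI => //; rewrite -[_ @^-1` _]setTI; exact: mxy.
Qed.

End product_measurability.

(** * Measurable fields of subspaces *)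

Section measurable_subbundle.
Context d0 (X : measurableType d0) (R : realType) (k d : nat).
Variable V : X -> set 'rV[R]_d.
Hypothesis VGr : forall x, Grass R k d (V x).

Definition measurable_frame (D : set X) (v : 'I_k -> X -> 'rV[R]_d) :=
  (forall i, meas_between D (trace_sigma D measurable) (Borel R d) (v i)) /\
  (forall x, D x -> orthonormal_family (fun i => v i x) /\
     V x = [set u | (u <= \matrix_(i < k) v i x)%MS]).

Definition isometric_trivialization (D : set X) :=
  let E := [set p : X * 'rV[R]_d | D p.1 /\ V p.1 p.2] in
  let F := D `*` [set: 'rV[R]_k] in
  exists (L : X * 'rV[R]_d -> X * 'rV[R]_k) (L' : X * 'rV[R]_k -> X * 'rV[R]_d),
    (forall p, E p -> F (L p)) /\ (forall q, F q -> E (L' q)) /\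
    (forall p, E p -> L' (L p) = p) /\ (forall q, F q -> L (L' q) = q) /\
    meas_between E (trace_sigma E (prod_sigma R d0 X d))
                   (trace_sigma F (prod_sigma R d0 X k)) L /\
    meas_between F (trace_sigma F (prod_sigma R d0 X k))
                   (trace_sigma E (prod_sigma R d0 X d)) L' /\
    (forall p, E p -> (L p).1 = p.1) /\
    (forall x, D x ->
       (forall (a : R) u w, V x u -> V x w ->
          (L (x, a *: u + w)).2 = a *: (L (x, u)).2 + (L (x, w)).2) /\
       (forall u, V x u -> enorm (L (x, u)).2 = enorm u) /\
       (forall y, exists u, V x u /\ (L (x, u)).2 = y)).

Lemma preimage_GrOpen (D : set X) (P : X -> 'M[R]_d) (O : set 'M[R]_d) :
  (forall x, D x -> orthproj (P x) (V x)) ->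
  D `&` V @^-1` [set W | Grass R k d W /\ exists Q, orthproj Q W /\ O Q] = D `&` P @^-1` O.
Proof.
move=> PV; apply/seteqP; split=> x [Dx Vx]; split=> //=.
  by case: Vx => _ [Q [QV OQ]]; rewrite (orthproj_uniq (PV x Dx) QV).
by split=> //; exists (P x); split=> //; exact: PV.
Qed.

Lemma meas_between_GrBorelP (D : set X) (P : X -> 'M[R]_d) : measurable D ->
  (forall x, D x -> orthproj (P x) (V x)) ->
  meas_between D (trace_sigma D measurable) (GrBorel R k d) V <-> mx_measurable D P.
Proof.
move=> mD PV; rewrite mx_measurableP; split=> [mV|mP B GrB].
  suff : preimage_set_system D P [set O | open O] `<=` measurable.
    by move=> hG; exact: (@measurability _ _ X (borel_mx R d d) D P _ erefl hG).
  move=> _ [U oU <-]; rewrite -(preimage_GrOpen _ PV).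
  have GrU : GrBorel R k d [set W | Grass R k d W /\ exists Q, orthproj Q W /\ U Q].
    by apply: sub_sigma_algebra; exists U.
  by have /trace_measurableP[] := mV _ GrU.
apply/trace_measurableP => //; split=> [|x []//].
pose G := [set B | measurable (D `&` V @^-1` B)].
suff : GrBorel R k d `<=` G by move/(_ B GrB).
apply: smallest_sub => [|_ [U [oU ->]]]; last first.
  by rewrite /G /= (preimage_GrOpen _ PV); exact: mP (sub_sigma_algebra oU).
split=> [|A GA|F GF]; rewrite /G /=.
- by rewrite preimage_set0 setI0.
- rewrite (_ : _ `&` _ = D `\` (D `&` V @^-1` A)); first exact: measurableD.
  apply/seteqP; split=> x /= [Dx]; first by move=> [_ nAx]; split=> // -[].
  by move=> nA; do !split => //; move=> Ax; apply: nA.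
- by rewrite preimage_bigcup setI_bigcupr; exact: bigcupT_measurable.
Qed.

Lemma measurable_frame_of_Grass (D : set X) : measurable D ->
  meas_between D (trace_sigma D measurable) (GrBorel R k d) V ->
  exists v, measurable_frame D v.
Proof.
move=> mD mV; pose P x := projT1 (cid (Grass_orthproj (VGr x))).
have PV x : orthproj (P x) (V x) := projT2 (cid (Grass_orthproj (VGr x))).
have /(meas_between_GrBorelP mD (fun x _ => PV x)) mP := mV.
exists (fun i x => (onbasis (rows (P x)))`_i); split=> [i|x _]; last exact: Grass_onbasis.
apply/meas_between_BorelP => //.
have -> : (fun x => (onbasis (rows (P x)))`_i) = (fun x =>
    [seq y <- [seq (gram_schmidt (rows (P x)))`_j | j : 'I_d <- enum 'I_d] | y != 0]`_i).
  apply/funext => x; rewrite /onbasis -seq_enum_ord //.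
  by rewrite size_gram_schmidt size_map size_enum_ord.
apply: mx_measurable_nth_nonzero => // j; apply: mx_measurable_gram_schmidt => l.
by move=> i' l'; under eq_fun do rewrite mxE; exact: mP.
Qed.

Lemma measurable_Grass_of_frame (D : set X) v : measurable D -> measurable_frame D v ->
  meas_between D (trace_sigma D measurable) (GrBorel R k d) V.
Proof.
move=> mD [mv vON]; pose M x := \matrix_(i < k) v i x.
apply/(meas_between_GrBorelP (P := fun x => (M x)^T *m M x)) => // [x Dx|].
  have [/orthonormal_mulmx_tr MON ->] := vON x Dx; exact: orthproj_orthonormal.
have mM : mx_measurable D M.
  by apply: mx_measurable_rows => i; exact/meas_between_BorelP/mv.
exact: mx_measurable_mul (mx_measurable_tr mM) mM.
Qed.

Lemma isometric_trivialization_of_frame (D : set X) v : measurable D ->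
  measurable_frame D v -> isometric_trivialization D.
Proof.
move=> mD [mv vON] E F; pose M x := \matrix_(i < k) v i x.
have MON x : D x -> M x *m (M x)^T = 1%:M.
  by move=> Dx; have [/orthonormal_mulmx_tr] := vON x Dx.
have VM x : D x -> V x = [set u | (u <= M x)%MS] by move=> Dx; have [] := vON x Dx.
have VsubM x u : D x -> V x u -> (u <= M x)%MS by move=> /VM ->.
have mM : mx_measurable D M by apply: mx_measurable_rows => i; exact/meas_between_BorelP/mv.
have mDT n : measurable (D `*` setT : set (prod_mx X R n)).
  by apply: measurable_prod_rect => //; exact: Borel_setT.
exists (fun p => (p.1, p.2 *m (M p.1)^T)), (fun q => (q.1, q.2 *m M q.1)).
split=> [[x u] [/= Dx _] //|].
split=> [[x y] [/= Dx _]|]; first by split=> //=; rewrite VM //; exact: submxMl.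
split=> [[x u] [/= Dx Vu]|]; first by rewrite /= orthonormal_sub_trK ?MON ?VsubM.
split=> [[x y] [/= Dx _]|]; first by rewrite /= orthonormal_trK ?MON.
split.
  apply: (meas_between_trace (mDT d)) => [[x u] [] //||[x u] [/= Dx _]] //.
  apply: measurable_fun_prod_mx => /=; first exact: measurable_fst_setX.
  apply: mx_measurable_mul; first exact: mx_measurable_snd.
  by apply: mx_measurable_tr; exact: mx_measurable_fst mD mM.
split.
  apply: (meas_between_trace (mDT k)) => [[x y] [] //||[x y] [/= Dx _]].
    apply: measurable_fun_prod_mx => /=; first exact: measurable_fst_setX.
    apply: mx_measurable_mul; first exact: mx_measurable_snd.
    exact: (mx_measurable_fst mD mM).
  by split=> //=; rewrite VM //; exact: submxMl.
split=> // x Dx; split=> [a u w _ _|]; first by rewrite /= mulmxDl scalemxAl.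
split=> [u Vu|y]; first by rewrite /enorm /= orthonormal_dotv_tr ?MON ?VsubM.
by exists (y *m M x); rewrite VM //= submxMl orthonormal_trK ?MON.
Qed.

Lemma measurable_frame_of_trivialization (D : set X) : measurable D ->
  isometric_trivialization D -> exists v, measurable_frame D v.
Proof.
move=> mD [L [L' [_ [FE [LK [L'K [_ [mL' [L1 fib]]]]]]]]].
have DT_F x (y : 'rV[R]_k) : D x -> (D `*` setT) (x, y) by [].
exists (fun i x => (L' (x, delta_mx 0 i)).2); split=> [i|x Dx].
  by apply: meas_between_section mL' => // x Dx; exact/FE/DT_F.
have L'x y : L' (x, y) = (x, (L' (x, y)).2).
  by rewrite [LHS]surjective_pairing -(L1 _ (FE _ (DT_F x y Dx))) L'K.
have Lx u : V x u -> L (x, u) = (x, (L (x, u)).2).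
  by move=> Vu; rewrite [LHS]surjective_pairing L1.
have [A [_ VA]] := VGr x; have [lin [iso _]] := fib x Dx.
rewrite VA in lin iso Lx *.
apply: (isometry_orthonormal_basis (psi := fun y => (L' (x, y)).2) lin iso) => [y|y|u Au].
- by have [] := FE _ (DT_F x y Dx); rewrite L'x VA.
- by rewrite -L'x L'K //; exact: DT_F x y Dx.
- by rewrite /= -(Lx u Au) LK //; split=> //=; rewrite VA.
Qed.

End measurable_subbundle.

Theorem theoremA8 (R : realType) (d0 : measure_display) (X : measurableType d0)
  (mu : {measure set X -> \bar R}) (hfin : (mu setT < +oo)%E)
  (k d : nat) (hkd : (k <= d)%N)
  (V : X -> set 'rV[R]_d) (hV : forall x, Grass R k d (V x)) :
  let P1 :=
    exists X1 : set X, measurable X1 /\ mu (~` X1) = 0%E /\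
      meas_between X1 (trace_sigma X1 measurable) (GrBorel R k d) V in
  let P2 :=
    exists X2 : set X, measurable X2 /\ mu (~` X2) = 0%E /\
      exists v : 'I_k -> X -> 'rV[R]_d,
        (forall i, meas_between X2 (trace_sigma X2 measurable) (Borel R d) (v i)) /\
        (forall x, X2 x ->
           (forall i j, dotv (v i x) (v j x) = (i == j)%:R) /\
           V x = [set u | (u <= \matrix_(i < k, j < d) v i x 0 j)%MS]) in
  let P3 :=
    exists X3 : set X, measurable X3 /\ mu (~` X3) = 0%E /\
      let E := [set p : X * 'rV[R]_d | X3 p.1 /\ V p.1 p.2] in
      let F := X3 `*` [set: 'rV[R]_k] in
      exists (L : X * 'rV[R]_d -> X * 'rV[R]_k) (L' : X * 'rV[R]_k -> X * 'rV[R]_d),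
        (forall p, E p -> F (L p)) /\ (forall q, F q -> E (L' q)) /\
        (forall p, E p -> L' (L p) = p) /\ (forall q, F q -> L (L' q) = q) /\
        meas_between E (trace_sigma E (prod_sigma R d0 X d))
                       (trace_sigma F (prod_sigma R d0 X k)) L /\
        meas_between F (trace_sigma F (prod_sigma R d0 X k))
                       (trace_sigma E (prod_sigma R d0 X d)) L' /\
        (forall p, E p -> (L p).1 = p.1) /\
        (forall x, X3 x ->
           (forall (a : R) u w, V x u -> V x w ->
              (L (x, a *: u + w)).2 = a *: (L (x, u)).2 + (L (x, w)).2) /\
           (forall u, V x u -> enorm (L (x, u)).2 = enorm u) /\
           (forall y, exists u, V x u /\ (L (x, u)).2 = y)) in
  (P1 <-> P2) /\ (P2 <-> P3).
Proof.
move=> P1 P2 P3; split; split.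
- move=> [X1 [mX1 [X1null mV]]]; exists X1; do 2!split=> //.
  exact: measurable_frame_of_Grass.
- move=> [X2 [mX2 [X2null [v vX2]]]]; exists X2; do 2!split=> //.
  exact: measurable_Grass_of_frame vX2.
- move=> [X2 [mX2 [X2null [v vX2]]]]; exists X2; do 2!split=> //.
  exact: isometric_trivialization_of_frame vX2.
- move=> [X3 [mX3 [X3null triv]]]; exists X3; do 2!split=> //.
  exact: measurable_frame_of_trivialization.
Qed.
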